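(* Let $n\ge3$, $1\le k\le n/2$ and $0<a_1\le\dots\le a_{n+1}$ with $a_{n+1}\le a_1\big(\frac{n}{n-k}\big)^{1/6}$. Then the ellipsoid $\{x\in\mathbb{R}^{n+1}:\sum_{i=1}^{n+1}x_i^2/a_i^2=1\}$ satisfies $S\le a(n,k,H,0)$ at every point.
   Context: For a hypersurface in $\mathbb{R}^{n+1}$ with principal curvatures $\lambda_i$, $S=\sum\lambda_i^2$ and $H=\frac1n|\sum\lambda_i|$. For $1\le k\le n/2$, $a(n,k,t,0)=\frac{n^2t^2}{n-k}$. *)

From HB Require Import structures.
From mathcomp Require Import all_boot all_order all_algebra.
From mathcomp Require Import all_classical all_reals all_analysis.
Set Implicit Arguments. Unset Strict Implicit. Unset Printing Implicit Defensive.
Import Order.TTheory GRing.Theory Num.Theory.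
Local Open Scope ring_scope.

Definition ellF (R : realType) (m : nat) (a : 'I_m -> R) (x : 'rV[R]_m) : R :=
  \sum_(i < m) (x 0 i) ^+ 2 / (a i) ^+ 2.

Definition ellGrad (R : realType) (m : nat) (a : 'I_m -> R) (x : 'rV[R]_m)
  : 'rV[R]_m := \row_i (2 * x 0 i / (a i) ^+ 2).

Definition ellHess (R : realType) (m : nat) (a : 'I_m -> R) : 'M[R]_m :=
  \matrix_(i, j) (if i == j then 2 / (a i) ^+ 2 else 0).

Definition rnorm (R : realType) (m : nat) (v : 'rV[R]_m) : R :=
  Num.sqrt (\sum_(i < m) (v 0 i) ^+ 2).

Definition tangent_frame (R : realType) (n : nat) (a : 'I_n.+1 -> R)
  (x : 'rV[R]_n.+1) (E : 'M[R]_(n, n.+1)) : Prop :=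
  E *m E^T = 1%:M /\ E *m (ellGrad a x)^T = 0.

(* Matrix (h_ij) of the second fundamental form of the level set {F = 1}
   in the tangent frame E, w.r.t. the unit normal grad F/|grad F|:
   h_ij = Hess F (e_i, e_j) / |grad F|.  Its eigenvalues are the principal
   curvatures lambda_1..lambda_n. *)
Definition sff (R : realType) (n : nat) (a : 'I_n.+1 -> R)
  (x : 'rV[R]_n.+1) (E : 'M[R]_(n, n.+1)) : 'M[R]_n :=
  (rnorm (ellGrad a x))^-1 *: (E *m ellHess a *m E^T).

(* S = sum_i lambda_i^2 = sum_{i,j} h_ij^2 *)
Definition Ssq (R : realType) (n : nat) (h : 'M[R]_n) : R :=
  \sum_(i < n) \sum_(j < n) (h i j) ^+ 2.

(* H = (1/n) |sum_i lambda_i| = |tr h| / n *)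
Definition Hmean (R : realType) (n : nat) (h : 'M[R]_n) : R :=
  `|\tr h| / n%:R.

Definition a_bound (R : realType) (n k : nat) (t : R) : R :=
  (n%:R) ^+ 2 * t ^+ 2 / (n - k)%:R.

(** In the orthonormal tangent frame [E] the second fundamental form of the
    ellipsoid is [g * E D E^T], where [g > 0] and [D = diag (2 / a_i^2)].
    Since [P = E^T E] is an orthogonal projection of trace [n], the matrix
    [B = E D E^T] satisfies [tr B = sum_i d_i P_ii >= n min d] and
    [tr B^2 = sum_ij d_i d_j P_ij^2 <= max d * tr B].  Hence
    [(n - k) tr B^2 <= (tr B)^2] as soon as [(n - k) max d <= n min d], i.e.
    [(n - k) a_(n+1)^2 <= n a_1^2], which the pinching hypothesis implies
    (the exponent [1/6] is stronger than the [1/2] actually needed). *)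
From HB Require Import structures.
From mathcomp Require Import all_boot all_order all_algebra.
From mathcomp Require Import all_classical all_reals all_analysis.
From mathcomp Require Import ring lra.
Set Implicit Arguments.
Unset Strict Implicit.
Unset Printing Implicit Defensive.
Import Order.TTheory GRing.Theory Num.Theory.
Local Open Scope ring_scope.

Section DiagonalCompression.

Variables (R : realDomainType) (n p : nat) (E : 'M[R]_(n, p)).
Hypothesis E_orthonormal : E *m E^T = 1%:M.
Variable d : 'rV[R]_p.

Let P := E^T *m E.
Let B := E *m diag_mx d *m E^T.

Lemma proj_sym i j : P j i = P i j.
Proof. by rewrite !mxE; apply: eq_bigr => l _; rewrite !mxE mulrC. Qed.

Lemma proj_idem : P *m P = P.
Proof. by rewrite /P mulmxA -(mulmxA E^T) E_orthonormal mulmx1. Qed.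

Lemma proj_diag_sum_sqr i : P i i = \sum_j P i j ^+ 2.
Proof.
by rewrite -{1}proj_idem mxE; apply: eq_bigr => j _; rewrite proj_sym expr2.
Qed.

Lemma proj_diag_ge0 i : 0 <= P i i.
Proof. by rewrite proj_diag_sum_sqr sumr_ge0 // => j _; apply: sqr_ge0. Qed.

Lemma trace_proj : \tr P = n%:R.
Proof. by rewrite /P mxtrace_mulC E_orthonormal mxtrace1. Qed.

Lemma compression_trace : \tr B = \sum_i d 0 i * P i i.
Proof.
rewrite /B mxtrace_mulC mulmxA -/P /mxtrace.
by apply: eq_bigr => i _; rewrite mul_mx_diag mxE mulrC.
Qed.

Lemma compression_trace_sqr :
  \tr (B *m B^T) = \sum_i \sum_j d 0 i * d 0 j * P i j ^+ 2.
Proof.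
have BT : B^T = B by rewrite /B !trmx_mul trmxK tr_diag_mx mulmxA.
have DP k l : (diag_mx d *m P) k l = d 0 k * P k l by rewrite mul_diag_mx mxE.
have -> : \tr (B *m B^T) = \tr ((diag_mx d *m P) *m (diag_mx d *m P)).
  by rewrite BT /B /P -!mulmxA mxtrace_mulC !mulmxA.
rewrite /mxtrace; apply: eq_bigr => i _; rewrite mxE; apply: eq_bigr => j _.
by rewrite !DP proj_sym; ring.
Qed.

Lemma compression_trace_ge (m : R) :
  (forall i, m <= d 0 i) -> n%:R * m <= \tr B.
Proof.
move=> md; rewrite -trace_proj compression_trace /mxtrace mulr_suml.
by apply: ler_sum => i _; rewrite mulrC ler_wpM2r ?proj_diag_ge0.
Qed.

Lemma compression_trace_sqr_le (M : R) :
  (forall i, 0 <= d 0 i <= M) -> \tr (B *m B^T) <= M * \tr B.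
Proof.
move=> dM; rewrite compression_trace_sqr compression_trace mulr_sumr.
apply: ler_sum => i _; rewrite proj_diag_sum_sqr !mulr_sumr.
apply: ler_sum => j _; have /andP[di0 _] := dM i; have /andP[dj0 djM] := dM j.
by rewrite mulrAC mulrC; apply: ler_wpM2r => //; rewrite mulr_ge0 ?sqr_ge0.
Qed.

Lemma compression_pinched (K m M : R) :
  0 <= K -> 0 <= m -> (forall i, m <= d 0 i <= M) -> K * M <= n%:R * m ->
  K * \tr (B *m B^T) <= \tr B ^+ 2.
Proof.
move=> K0 m0 dmM KM.
have trB_ge : n%:R * m <= \tr B.
  by apply: compression_trace_ge => i; case/andP: (dmM i).
have trB0 : 0 <= \tr B by rewrite (le_trans _ trB_ge) // mulr_ge0.
have trBB_le : \tr (B *m B^T) <= M * \tr B.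
  apply: compression_trace_sqr_le => i.
  by have /andP[mdi ->] := dmM i; rewrite andbT (le_trans m0).
rewrite (le_trans (ler_wpM2l K0 trBB_le)) // mulrA expr2.
by rewrite ler_wpM2r // (le_trans KM).
Qed.

End DiagonalCompression.

Lemma Ssq_trace (R : realType) (n : nat) (h : 'M[R]_n) :
  Ssq h = \tr (h *m h^T).
Proof.
apply: eq_bigr => i _; rewrite mxE.
by apply: eq_bigr => j _; rewrite !mxE expr2.
Qed.

Lemma SsqZ (R : realType) (n : nat) (c : R) (h : 'M[R]_n) :
  Ssq (c *: h) = c ^+ 2 * Ssq h.
Proof.
rewrite /Ssq mulr_sumr; apply: eq_bigr => i _; rewrite mulr_sumr.
by apply: eq_bigr => j _; rewrite mxE exprMn.
Qed.

Lemma Ssq_le_a_bound (R : realType) (n k : nat) (h : 'M[R]_n) :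
  (k < n)%N -> (n - k)%:R * Ssq h <= \tr h ^+ 2 ->
  Ssq h <= a_bound n k (Hmean h).
Proof.
move=> kn pinched; have n0 : 0 < n%:R :> R by rewrite ltr0n (leq_ltn_trans _ kn).
have nk0 : 0 < (n - k)%:R :> R by rewrite ltr0n subn_gt0.
rewrite /a_bound /Hmean expr_div_n real_normK ?num_real //.
by rewrite mulrCA divff ?mulr1 ?gt_eqF ?exprn_gt0 // ler_pdivlMr // mulrC.
Qed.

Lemma ellHess_diag (R : realType) (m : nat) (a : 'I_m -> R) :
  ellHess a = diag_mx (\row_i (2 / a i ^+ 2)).
Proof.
apply/matrixP => i j; rewrite !mxE.
by case: eqP => [->|]; rewrite ?mulr1n ?mulr0n.
Qed.

Lemma powR_sqr_le (R : realType) (c r : R) :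
  1 <= c -> r * 2 <= 1 -> (c `^ r) ^+ 2 <= c.
Proof.
move=> c1 r2; rewrite -powR_mulrn ?powR_ge0 // -powRrM.
exact: ler1_powR.
Qed.

Lemma ler_div_sqr (R : realFieldType) (c u v : R) :
  0 <= c -> 0 < u -> u <= v -> c / v ^+ 2 <= c / u ^+ 2.
Proof.
move=> c0 u0 uv; have v0 := lt_le_trans u0 uv.
rewrite ler_wpM2l // lef_pV2 ?posrE ?exprn_gt0 //.
by rewrite lerXn2r // nnegrE ltW.
Qed.

Lemma pinching_sqr_le (R : realType) (N K r a0 am : R) :
  0 < K <= N -> r * 2 <= 1 -> 0 <= a0 -> 0 <= am -> am <= a0 * (N / K) `^ r ->
  K * am ^+ 2 <= N * a0 ^+ 2.
Proof.
move=> /andP[K0 KN] r2 a00 am0 hmax.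
have t0 : 0 <= (N / K) `^ r := powR_ge0 _ _.
rewrite -ler_pdivlMl // [X in _ <= X](_ : _ = a0 ^+ 2 * (N / K)); last by ring.
have am_sqr := lerXn2r 2 am0 (mulr_ge0 a00 t0) hmax.
rewrite (le_trans am_sqr) // exprMn ler_wpM2l ?sqr_ge0 // powR_sqr_le //.
by rewrite ler_pdivlMr // mul1r.
Qed.

Theorem mainTheorem8 (R : realType) (n k : nat) (a : 'I_n.+1 -> R) :
  (3 <= n)%N -> (1 <= k)%N -> (k.*2 <= n)%N ->
  0 < a ord0 ->
  (forall i j : 'I_n.+1, (i <= j)%N -> a i <= a j) ->
  a ord_max <= a ord0 * ((n%:R / (n - k)%:R) `^ (6%:R^-1)) ->
  forall (x : 'rV[R]_n.+1), ellF a x = 1 ->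
  forall (E : 'M[R]_(n, n.+1)), tangent_frame a x E ->
  Ssq (sff a x E) <= a_bound n k (Hmean (sff a x E)).
Proof.
move=> _ k1 k2n a0 amono hmax x _ E [EE _].
have kn : (k < n)%N by rewrite (leq_trans _ k2n) // -addnn -addn1 leq_add2l.
have nk0 : 0 < (n - k)%:R :> R by rewrite ltr0n subn_gt0.
have a_bounds i : a ord0 <= a i <= a ord_max.
  by rewrite !amono //= -ltnS.
have am0 : 0 < a ord_max by rewrite (lt_le_trans a0) //; case/andP: (a_bounds ord0).
have pinching : (n - k)%:R * a ord_max ^+ 2 <= n%:R * a ord0 ^+ 2.
  apply: pinching_sqr_le hmax; rewrite ?nk0 ?ler_nat ?leq_subr ?ltW //.
  by lra.
apply: Ssq_le_a_bound => //.
rewrite /sff SsqZ mxtraceZ exprMn mulrCA ler_wpM2l ?sqr_ge0 //.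
rewrite Ssq_trace ellHess_diag.
apply: (compression_pinched EE (m := 2 / a ord_max ^+ 2) (M := 2 / a ord0 ^+ 2)).
- exact: ltW.
- by rewrite divr_ge0 ?sqr_ge0.
- move=> i; have /andP[a0i aim] := a_bounds i.
  by rewrite mxE !ler_div_sqr // (lt_le_trans a0).
- rewrite !mulrA ler_pdivrMr ?exprn_gt0 // mulrAC ler_pdivlMr ?exprn_gt0 //.
  by rewrite mulrAC [_ * 2 * _]mulrAC ler_pM2r.
Qed.
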